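(* Let $t\in\{w,m\}$ index two types of individuals, with exogenous masses $\mu_w>0,\mu_m>0$, and let $r:=\mu_w/\mu_m$. For each type $t$, let $\Delta_t:=Y_{1t}-Y_{2t}$ (difference of random potential incomes in sectors 1 and 2) have cumulative distribution function $F_{\Delta_t}$, and let $h_t:(0,1)\to[0,\infty)$. Assume that for each $t$: $h_t$ is decreasing and continuously differentiable; $F_{\Delta_t}$ is continuously differentiable with a continuous inverse $F_{\Delta_t}^{-1}$; and $\mathbb P[\Delta_t>0]\in(0,1)$. Define the efficient compositions $r^e_t:=\mathbb P[\Delta_t>0]$, $t\in\{w,m\}$. If $r^e_w<r^e_m$, then there exists an equilibrium $(r_w^*,r_m^* )$ such that $r_w^*<r_w^e<r_m^e<r_m^*$. Moreover, there is no equilibrium $(r_w^*,r_m^* )$ such that $r_w^e<r_w^*<r_m^*<r_m^e$.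
   Context: For $x,y\in(0,1)$, $z>0$, define $g_t(x,y,z):=h_t\left(\frac{1}{1+z y/x}\right)-h_t\left(\frac{1}{1+z(1-y)/(1-x)}\right)$. A composition is a pair $(r_w,r_m)\in[0,1]^2$, $r_t$ being the share of type-$t$ individuals in sector 1. An equilibrium is a composition $(r_w^*,r_m^* )$ such that: (i) if $r_w^*\in(0,1)$ then $F_{\Delta_w}^{-1}(1-r_w^* )=g_w(r_w^*,r_m^*,1/r)$, and if $r_m^*\in(0,1)$ then $F_{\Delta_m}^{-1}(1-r_m^* )=g_m(r_m^*,r_w^*,r)$; (ii) if $r_w^*=0$, there is $\bar\delta>0$ such that for all $0<\delta<\bar\delta$, $F_{\Delta_w}^{-1}(1-\delta)\le g_w(\delta,r_m^*,1/r)$; (iii) if $r_m^*=1$, there is $\bar\delta>0$ such that for all $0<\delta<\bar\delta$, $F_{\Delta_m}^{-1}(\delta)\ge g_m(1-\delta,r_w^*,r)$; (iv) symmetrically, if $r_w^*=1$, there is $\bar\delta>0$ such that for all $0<\delta<\bar\delta$, $F_{\Delta_w}^{-1}(\delta)\ge g_w(1-\delta,r_m^*,1/r)$, and if $r_m^*=0$, there is $\bar\delta>0$ such that for all $0<\delta<\bar\delta$, $F_{\Delta_m}^{-1}(1-\delta)\le g_m(\delta,r_w^*,r)$. *)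

From Stdlib Require Import Reals.
From Coquelicot Require Import Coquelicot.
Open Scope R_scope.

Definition is_cdf (F : R -> R) : Prop :=
  (forall x y, x <= y -> F x <= F y) /\
  (forall x, filterlim F (at_right x) (locally (F x))) /\
  is_lim F m_infty 0 /\
  is_lim F p_infty 1.

Definition quantile (F : R -> R) (u : R) : R :=
  real (Glb_Rbar (fun x => u <= F x)).

(* h : (0,1) -> [0,oo) is represented by a total function; the only point
   outside (0,1) at which g evaluates h is 1 (at corner compositions), where
   h is extended by its left limit inf_{0<s<1} h(s). *)
Definition hbar (h : R -> R) (x : R) : R :=
  if Rlt_dec x 1 then h x
  else real (Glb_Rbar (fun y => exists s, 0 < s < 1 /\ y = h s)).

Definition g (h : R -> R) (x y z : R) : R :=
  hbar h (1 / (1 + z * y / x)) - hbar h (1 / (1 + z * (1 - y) / (1 - x))).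

Definition equilibrium (Fw Fm hw hm : R -> R) (r rw rm : R) : Prop :=
  0 <= rw <= 1 /\ 0 <= rm <= 1 /\
  (0 < rw < 1 -> quantile Fw (1 - rw) = g hw rw rm (1 / r)) /\
  (0 < rm < 1 -> quantile Fm (1 - rm) = g hm rm rw r) /\
  (rw = 0 -> exists db, 0 < db /\
     forall d, 0 < d < db -> quantile Fw (1 - d) <= g hw d rm (1 / r)) /\
  (rm = 1 -> exists db, 0 < db /\
     forall d, 0 < d < db -> quantile Fm d >= g hm (1 - d) rw r) /\
  (rw = 1 -> exists db, 0 < db /\
     forall d, 0 < d < db -> quantile Fw d >= g hw (1 - d) rm (1 / r)) /\
  (rm = 0 -> exists db, 0 < db /\
     forall d, 0 < d < db -> quantile Fm (1 - d) <= g hm d rw r).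

Definition h_assumptions (h : R -> R) : Prop :=
  (forall x, 0 < x < 1 -> 0 <= h x) /\
  (forall x y, 0 < x -> x < y -> y < 1 -> h y < h x) /\
  (forall x, 0 < x < 1 -> ex_derive h x /\ continuous (Derive h) x).

(* Standing assumptions on F_{Delta_t}: a CDF, continuously differentiable,
   with continuous inverse on (0,1), and P[Delta_t > 0] = 1 - F(0) in (0,1). *)
Definition F_assumptions (F : R -> R) : Prop :=
  is_cdf F /\
  (forall x, ex_derive F x /\ continuous (Derive F) x) /\
  (forall u, 0 < u < 1 -> continuous (quantile F) u) /\
  0 < 1 - F 0 < 1.

From Stdlib Require Import Reals Lra Classical ClassicalEpsilon.
From Coquelicot Require Import Coquelicot.
Open Scope R_scope.

(* Fix the share y of the other type and consider the gap
   [excess] x = F^{-1}(1 - x) - g(x, y, z) in the equilibrium condition; g has the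
   sign of y - x.  For women facing y > r^e_w the gap is negative at x = r^e_w, where
   F^{-1}(F 0) <= 0 < g, so its last zero below r^e_w (or 0 if there is none) is a best
   response; for men facing y < r^e_m the gap is positive at r^e_m, since
   F^{-1}(F 0) = 0 > g, and its first zero above r^e_m (or 1) is a best response.
   As g is nondecreasing in y, both gaps decrease in y and these extremal zeros are
   antitone in y.  The composite of the two responses is then a nondecreasing self-map
   of [r^e_m, 1], and its fixed point is an equilibrium with
   r_w < r^e_w < r^e_m < r_m.  Conversely r^e_w < r_w < r_m would give
   F_w^{-1}(1 - r_w) <= 0 < g_w(r_w, r_m, 1/r), violating condition (i). *)

Lemma continuous_eps_delta (f : R -> R) (x : R) :
  continuous f x -> forall eps, 0 < eps ->
  exists d, 0 < d /\ forall y, Rabs (y - x) < d -> Rabs (f y - f x) < eps.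
Proof.
  intros Hc eps Heps.
  destruct (proj1 (filterlim_locally f (f x)) Hc (mkposreal eps Heps)) as [d Hd].
  exists d. split; [apply cond_pos|]. intros y Hy. exact (Hd y Hy).
Qed.

Definition last_zero (f : R -> R) (a b x : R) : Prop :=
  a <= x < b /\ (a < x -> f x = 0) /\ (forall y, x < y <= b -> f y < 0).

Definition first_zero (f : R -> R) (a b x : R) : Prop :=
  a < x <= b /\ (x < b -> f x = 0) /\ (forall y, a <= y < x -> 0 < f y).

Lemma last_zero_exists (f : R -> R) (a b : R) :
  a < b -> (forall x, a < x <= b -> continuous f x) -> f b < 0 ->
  exists x, last_zero f a b x.
Proof.
  intros Hab Hc Hb.
  destruct (classic (exists x, a < x <= b /\ 0 <= f x)) as [Hex | Hno].
  2:{ exists a. split; [lra|]. split; [lra|]. intros y Hy.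
      apply Rnot_le_lt. intros Hy'. apply Hno. exists y. split; [lra | exact Hy']. }
  set (E := fun x => a < x <= b /\ 0 <= f x).
  destruct (completeness E) as [s [Hub Hlub]];
    [exists b; intros x [Hx _]; lra | exact Hex |].
  assert (Has : a < s) by (destruct Hex as [x Hx]; pose proof (Hub x Hx); destruct Hx; lra).
  assert (Hsb : s <= b) by (apply Hlub; intros x [Hx _]; lra).
  pose proof (continuous_eps_delta f s (Hc s (conj Has Hsb))) as Hcs.
  assert (Hfs : 0 <= f s).
  { apply Rnot_lt_le. intros Hneg.
    destruct (Hcs (- f s)) as [d [Hd Hnear]]; [lra|].
    assert (Hbound : s <= s - d); [|lra].
    apply Hlub. intros x [Hx Hfx]. apply Rnot_lt_le. intros Hlt.
    assert (Hxs : x <= s) by (apply Hub; split; assumption).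
    specialize (Hnear x ltac:(apply Rabs_def1; lra)). apply Rabs_def2 in Hnear. lra. }
  assert (Hsb' : s < b) by (destruct (Req_dec s b) as [->|]; lra).
  exists s. split; [lra|]. split.
  - intros _. apply Rle_antisym; [|exact Hfs]. apply Rnot_lt_le. intros Hpos.
    destruct (Hcs (f s) Hpos) as [d [Hd Hnear]].
    set (x := Rmin (s + d / 2) b).
    assert (Hx : s < x <= s + d / 2 /\ x <= b)
      by (unfold x; split; [split; [apply Rmin_case|apply Rmin_l]|apply Rmin_r]; lra).
    specialize (Hnear x ltac:(apply Rabs_def1; lra)). apply Rabs_def2 in Hnear.
    assert (x <= s) by (apply Hub; split; lra). lra.
  - intros y Hy. apply Rnot_le_lt. intros Hfy.
    assert (y <= s) by (apply Hub; split; [lra | exact Hfy]). lra.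
Qed.

Lemma first_zero_exists (f : R -> R) (a b : R) :
  a < b -> (forall x, a <= x < b -> continuous f x) -> 0 < f a ->
  exists x, first_zero f a b x.
Proof.
  intros Hab Hc Ha.
  destruct (last_zero_exists (fun t => - f (- t)) (- b) (- a)) as [x [Hx [Hzero Hneg]]].
  - lra.
  - intros x Hx.
    assert (Hopp : forall t, continuous Ropp t)
      by (intros t; apply (ex_derive_continuous Ropp); auto_derive; trivial).
    apply (continuous_comp (fun t => f (- t)) Ropp); [|apply Hopp].
    apply (continuous_comp Ropp f); [apply Hopp | apply Hc; lra].
  - rewrite Ropp_involutive. lra.
  - exists (- x). split; [lra|]. split.
    + intros Hxb. specialize (Hzero ltac:(lra)). lra.
    + intros y Hy. specialize (Hneg (- y) ltac:(lra)). rewrite Ropp_involutive in Hneg. lra.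
Qed.

Lemma last_zero_le (f1 f2 : R -> R) (a b x1 x2 : R) :
  (forall x, a < x <= b -> f2 x <= f1 x) ->
  last_zero f1 a b x1 -> last_zero f2 a b x2 -> x2 <= x1.
Proof.
  intros Hf [Hx1 [_ Hneg1]] [Hx2 [Hzero2 _]].
  apply Rnot_lt_le. intros Hlt.
  specialize (Hneg1 x2 ltac:(lra)). specialize (Hf x2 ltac:(lra)).
  specialize (Hzero2 ltac:(lra)). lra.
Qed.

Lemma first_zero_le (f1 f2 : R -> R) (a b x1 x2 : R) :
  (forall x, a <= x < b -> f2 x <= f1 x) ->
  first_zero f1 a b x1 -> first_zero f2 a b x2 -> x2 <= x1.
Proof.
  intros Hf [Hx1 [Hzero1 _]] [Hx2 [_ Hpos2]].
  apply Rnot_lt_le. intros Hlt.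
  specialize (Hpos2 x1 ltac:(lra)). specialize (Hf x1 ltac:(lra)).
  specialize (Hzero1 ltac:(lra)). lra.
Qed.

(* The fixed point is the supremum of [{y | y <= T y}]. *)
Lemma nondecreasing_self_map_fixpoint (T : R -> R) (a b : R) :
  a <= b -> (forall y, a <= y <= b -> a <= T y <= b) ->
  (forall y y', a <= y -> y <= y' -> y' <= b -> T y <= T y') ->
  exists y, a <= y <= b /\ T y = y.
Proof.
  intros Hab Hmaps Hmono.
  set (E := fun y => a <= y <= b /\ y <= T y).
  assert (Ha : E a) by (split; [lra | apply Hmaps; lra]).
  destruct (completeness E) as [s [Hub Hlub]];
    [exists b; intros y [Hy _]; lra | exists a; exact Ha |].
  assert (Has : a <= s) by (apply Hub, Ha).
  assert (Hsb : s <= b) by (apply Hlub; intros y [Hy _]; lra).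
  assert (Hup : s <= T s).
  { apply Hlub. intros y [Hy HyT].
    assert (y <= s) by (apply Hub; split; assumption).
    pose proof (Hmono y s ltac:(lra) ltac:(lra) ltac:(lra)). lra. }
  assert (Hdown : T s <= s).
  { apply Hub. pose proof (Hmaps s ltac:(lra)). split; [lra|].
    apply Hmono; lra. }
  exists s. split; lra.
Qed.

Lemma choice_on_domain {A B : Type} (b0 : B) (P : A -> Prop) (Q : A -> B -> Prop) :
  (forall a, P a -> exists b, Q a b) -> exists f : A -> B, forall a, P a -> Q a (f a).
Proof.
  intros H. apply (choice (fun a b => P a -> Q a b)). intros a.
  destruct (classic (P a)) as [Ha | Ha].
  - destruct (H a Ha) as [b Hb]. exists b. auto.
  - exists b0. tauto.
Qed.

Lemma hbar_lt1 (h : R -> R) (s : R) : s < 1 -> hbar h s = h s.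
Proof. intros Hs. unfold hbar. destruct (Rlt_dec s 1); [reflexivity | lra]. Qed.

(* An infinite infimum would make [hbar h 1] the junk value [0], still below [h s]. *)
Lemma hbar1_le (h : R -> R) (s : R) : h_assumptions h -> 0 < s < 1 -> hbar h 1 <= h s.
Proof.
  intros [Hnonneg _] Hs. unfold hbar. destruct (Rlt_dec 1 1) as [Hc | _]; [lra|].
  destruct (Glb_Rbar_correct (fun y => exists s, 0 < s < 1 /\ y = h s)) as [Hlb _].
  specialize (Hlb (h s) (ex_intro _ s (conj Hs eq_refl))).
  pose proof (Hnonneg s Hs).
  destruct (Glb_Rbar _); simpl in *; lra.
Qed.

Lemma hbar_decreasing (h : R -> R) (a b : R) :
  h_assumptions h -> 0 < a -> a < b -> b <= 1 -> hbar h b < hbar h a.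
Proof.
  intros Hh Ha Hab Hb. pose proof Hh as [_ [Hdec _]].
  rewrite (hbar_lt1 h a) by lra.
  destruct (Req_dec b 1) as [-> | Hb1].
  - pose proof (hbar1_le h ((a + 1) / 2) Hh ltac:(lra)).
    pose proof (Hdec a ((a + 1) / 2) Ha ltac:(lra) ltac:(lra)). lra.
  - rewrite hbar_lt1 by lra. apply Hdec; lra.
Qed.

Lemma hbar_continuous (h : R -> R) (s : R) :
  h_assumptions h -> 0 < s < 1 -> continuous (hbar h) s.
Proof.
  intros [_ [_ Hdiff]] Hs. apply (continuous_ext_loc _ h).
  - exists (mkposreal (1 - s) ltac:(lra)). intros y Hy. change (Rabs (y - s) < 1 - s) in Hy.
    apply Rabs_def2 in Hy. rewrite hbar_lt1 by lra. reflexivity.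
  - exact (ex_derive_continuous h s (proj1 (Hdiff s Hs))).
Qed.

Lemma odds_nonneg (z x y : R) : 0 < z -> 0 < x -> 0 <= y -> 0 <= z * y / x.
Proof.
  intros Hz Hx Hy. unfold Rdiv. apply Rmult_le_pos; [nra|].
  left. apply Rinv_0_lt_compat, Hx.
Qed.

Lemma odds_gap (z x y : R) :
  0 < x < 1 -> z * y / x - z * (1 - y) / (1 - x) = z * (y - x) / (x * (1 - x)).
Proof. intros Hx. field. lra. Qed.

(* [g] evaluates [h] at [1 / (1 + k)] for the two odds ratios [k = z * y / x] and
   [k = z * (1 - y) / (1 - x)], and [hbar h (1 / (1 + k))] increases with [k]. *)
Section Odds.

Variable h : R -> R.
Hypothesis Hh : h_assumptions h.

Lemma hbar_odds_lt (k k' : R) :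
  0 <= k -> k < k' -> hbar h (1 / (1 + k)) < hbar h (1 / (1 + k')).
Proof.
  intros Hk Hkk'. apply hbar_decreasing; [exact Hh | apply Rdiv_lt_0_compat; lra | |].
  - unfold Rdiv. rewrite !Rmult_1_l. apply Rinv_0_lt_contravar; lra.
  - unfold Rdiv. rewrite Rmult_1_l, <- Rinv_1. apply Rinv_le_contravar; lra.
Qed.

Lemma hbar_odds_le (k k' : R) :
  0 <= k -> k <= k' -> hbar h (1 / (1 + k)) <= hbar h (1 / (1 + k')).
Proof.
  intros Hk Hkk'. destruct (Req_dec k k') as [-> | Hne]; [lra|].
  left. apply hbar_odds_lt; lra.
Qed.

Lemma continuous_hbar_odds (c : R) (phi : R -> R) (x0 : R) :
  0 <= c -> continuous phi x0 -> 0 < phi x0 ->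
  continuous (fun x => hbar h (1 / (1 + c * phi x))) x0.
Proof.
  intros Hc Hphi Hpos. destruct (Req_dec c 0) as [-> | Hc0].
  (* The argument is then constantly [1], where [hbar h] need not be continuous. *)
  - apply (continuous_ext (fun _ => hbar h 1)); [|apply continuous_const].
    intros x. f_equal. field.
  - assert (Hk : 0 < c * phi x0) by (apply Rmult_lt_0_compat; lra).
    apply (continuous_comp (fun x => 1 / (1 + c * phi x)) (hbar h)).
    + apply (continuous_comp phi (fun k => 1 / (1 + c * k))); [exact Hphi|].
      apply (ex_derive_continuous (fun k => 1 / (1 + c * k))). auto_derive. lra.
    + apply hbar_continuous; [exact Hh|]. split.
      * apply Rdiv_lt_0_compat; lra.
      * unfold Rdiv. rewrite Rmult_1_l, <- Rinv_1. apply Rinv_0_lt_contravar; lra.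
Qed.

Variable z : R.
Hypothesis Hz : 0 < z.

Lemma g_pos (x y : R) : 0 < x < y -> y <= 1 -> 0 < g h x y z.
Proof.
  intros Hxy Hy. unfold g.
  assert (Hgap : 0 < z * (y - x) / (x * (1 - x)))
    by (apply Rdiv_lt_0_compat; apply Rmult_lt_0_compat; lra).
  rewrite <- odds_gap in Hgap by lra.
  pose proof (hbar_odds_lt (z * (1 - y) / (1 - x)) (z * y / x)
                (odds_nonneg z (1 - x) (1 - y) Hz ltac:(lra) ltac:(lra)) ltac:(lra)).
  lra.
Qed.

Lemma g_neg (x y : R) : 0 <= y < x -> x < 1 -> g h x y z < 0.
Proof.
  intros Hxy Hx. unfold g.
  assert (Hgap : 0 < z * (x - y) / (x * (1 - x)))
    by (apply Rdiv_lt_0_compat; apply Rmult_lt_0_compat; lra).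
  replace (z * (x - y) / (x * (1 - x))) with (- (z * (y - x) / (x * (1 - x)))) in Hgap
    by (field; lra).
  rewrite <- odds_gap in Hgap by lra.
  pose proof (hbar_odds_lt (z * y / x) (z * (1 - y) / (1 - x))
                (odds_nonneg z x y Hz ltac:(lra) ltac:(lra)) ltac:(lra)).
  lra.
Qed.

Lemma g_nondecreasing (x y y' : R) :
  0 < x < 1 -> 0 <= y -> y <= y' -> y' <= 1 -> g h x y z <= g h x y' z.
Proof.
  intros Hx Hy Hyy' Hy'. unfold g.
  assert (Hinc : z * y / x <= z * y' / x).
  { unfold Rdiv. apply Rmult_le_compat_r; [left; apply Rinv_0_lt_compat; lra | nra]. }
  assert (Hdec : z * (1 - y') / (1 - x) <= z * (1 - y) / (1 - x)).
  { unfold Rdiv. apply Rmult_le_compat_r; [left; apply Rinv_0_lt_compat; lra | nra]. }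
  pose proof (hbar_odds_le _ _ (odds_nonneg z x y Hz ltac:(lra) Hy) Hinc).
  pose proof (hbar_odds_le _ _ (odds_nonneg z (1 - x) (1 - y') Hz ltac:(lra) ltac:(lra)) Hdec).
  lra.
Qed.

Lemma g_continuous (y x0 : R) :
  0 <= y <= 1 -> 0 < x0 < 1 -> continuous (fun x => g h x y z) x0.
Proof.
  intros Hy Hx0. unfold g, Rdiv at 2 4.
  apply (continuous_minus (V := R_NormedModule)).
  - apply (continuous_hbar_odds (z * y) Rinv); [nra | | apply Rinv_0_lt_compat; lra].
    apply (ex_derive_continuous Rinv). auto_derive. lra.
  - apply (continuous_hbar_odds (z * (1 - y)) (fun x => / (1 - x))); [nra | |].
    + apply (ex_derive_continuous (fun x => / (1 - x))). auto_derive. lra.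
    + apply Rinv_0_lt_compat; lra.
Qed.

End Odds.

Lemma quantile_nonpos (F : R -> R) (u : R) : u <= F 0 -> quantile F u <= 0.
Proof.
  intros Hu. unfold quantile.
  destruct (Glb_Rbar_correct (fun t => u <= F t)) as [Hlb _].
  specialize (Hlb 0 Hu).
  destruct (Glb_Rbar _); simpl in *; lra.
Qed.

Lemma quantile_nonneg (F : R -> R) (u : R) :
  (forall s t, s <= t -> F s <= F t) -> F 0 < u -> 0 <= quantile F u.
Proof.
  intros Hmono Hu. unfold quantile.
  destruct (Glb_Rbar_correct (fun t => u <= F t)) as [_ Hglb].
  assert (H0 : Rbar_le 0 (Glb_Rbar (fun t => u <= F t))).
  { apply Hglb. intros t Ht. simpl. apply Rnot_lt_le. intros Ht0.
    pose proof (Hmono t 0 ltac:(lra)). lra. }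
  destruct (Glb_Rbar _); simpl in *; lra.
Qed.

(* By continuity, the nonnegative values of the quantile just above [F 0] pass to [F 0]. *)
Lemma quantile_cdf0 (F : R -> R) :
  (forall s t, s <= t -> F s <= F t) -> continuous (quantile F) (F 0) ->
  quantile F (F 0) = 0.
Proof.
  intros Hmono Hc. apply Rle_antisym; [apply quantile_nonpos; lra|].
  apply Rnot_lt_le. intros Hneg.
  destruct (continuous_eps_delta _ _ Hc (- quantile F (F 0))) as [d [Hd Hnear]]; [lra|].
  specialize (Hnear (F 0 + d / 2) ltac:(apply Rabs_def1; lra)). apply Rabs_def2 in Hnear.
  pose proof (quantile_nonneg F (F 0 + d / 2) Hmono ltac:(lra)). lra.
Qed.

Definition efficient_share (F : R -> R) : R := 1 - F 0.

Definition excess (F h : R -> R) (z y x : R) : R := quantile F (1 - x) - g h x y z.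

Section Excess.

Variables (F h : R -> R) (z : R).
Hypotheses (HF : F_assumptions F) (Hh : h_assumptions h) (Hz : 0 < z).

Lemma efficient_share_bounds : 0 < efficient_share F < 1.
Proof. destruct HF as [_ [_ [_ He]]]. exact He. Qed.

Lemma excess_continuous (y x : R) :
  0 <= y <= 1 -> 0 < x < 1 -> continuous (excess F h z y) x.
Proof.
  intros Hy Hx. destruct HF as [_ [_ [Hq _]]].
  apply (continuous_minus (V := R_NormedModule)).
  - apply (continuous_comp (fun t => 1 - t) (quantile F)); [|apply Hq; lra].
    apply (ex_derive_continuous (fun t => 1 - t)). auto_derive. trivial.
  - apply g_continuous; assumption.
Qed.

Lemma excess_antitone (y y' x : R) :
  0 < x < 1 -> 0 <= y -> y <= y' -> y' <= 1 -> excess F h z y' x <= excess F h z y x.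
Proof.
  intros Hx Hy Hyy' Hy'. unfold excess.
  pose proof (g_nondecreasing h Hh z Hz x y y' Hx Hy Hyy' Hy'). lra.
Qed.

Lemma excess_neg (y x : R) : 1 - x <= F 0 -> 0 < x < y -> y <= 1 -> excess F h z y x < 0.
Proof.
  intros Hq Hxy Hy. unfold excess.
  pose proof (quantile_nonpos F (1 - x) Hq).
  pose proof (g_pos h Hh z Hz x y Hxy Hy). lra.
Qed.

Lemma excess_pos_at_efficient_share (y : R) :
  0 <= y < efficient_share F -> 0 < excess F h z y (efficient_share F).
Proof.
  intros Hy. pose proof efficient_share_bounds as He.
  destruct HF as [[Hmono _] [_ [Hq _]]].
  unfold excess, efficient_share in *.
  replace (1 - (1 - F 0)) with (F 0) by ring.
  rewrite (quantile_cdf0 F Hmono (Hq (F 0) ltac:(lra))).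
  pose proof (g_neg h Hh z Hz (1 - F 0) y Hy ltac:(lra)). lra.
Qed.

Lemma last_zero_excess_exists (y : R) :
  efficient_share F < y <= 1 ->
  exists x, last_zero (excess F h z y) 0 (efficient_share F) x.
Proof.
  intros Hy. pose proof efficient_share_bounds as He.
  apply last_zero_exists; [lra | |].
  - intros x Hx. apply excess_continuous; lra.
  - apply excess_neg; unfold efficient_share in *; lra.
Qed.

Lemma first_zero_excess_exists (y : R) :
  0 <= y < efficient_share F ->
  exists x, first_zero (excess F h z y) (efficient_share F) 1 x.
Proof.
  intros Hy. pose proof efficient_share_bounds as He.
  apply first_zero_exists; [lra | |].
  - intros x Hx. apply excess_continuous; lra.
  - apply excess_pos_at_efficient_share, Hy.
Qed.

Lemma last_zero_excess_antitone (y y' x x' : R) :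
  0 <= y -> y <= y' -> y' <= 1 ->
  last_zero (excess F h z y) 0 (efficient_share F) x ->
  last_zero (excess F h z y') 0 (efficient_share F) x' -> x' <= x.
Proof.
  intros Hy Hyy' Hy'. pose proof efficient_share_bounds as He.
  apply last_zero_le. intros t Ht. apply excess_antitone; lra.
Qed.

Lemma first_zero_excess_antitone (y y' x x' : R) :
  0 <= y -> y <= y' -> y' <= 1 ->
  first_zero (excess F h z y) (efficient_share F) 1 x ->
  first_zero (excess F h z y') (efficient_share F) 1 x' -> x' <= x.
Proof.
  intros Hy Hyy' Hy'. pose proof efficient_share_bounds as He.
  apply first_zero_le. intros t Ht. apply excess_antitone; lra.
Qed.

End Excess.

Section Equilibrium.

Variables (Fw Fm hw hm : R -> R) (r : R).
Hypotheses (Hr : 0 < r) (Hhw : h_assumptions hw) (Hhm : h_assumptions hm)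
  (HFw : F_assumptions Fw) (HFm : F_assumptions Fm).

Lemma equilibrium_of_zeros (rw rm : R) :
  last_zero (excess Fw hw (1 / r) rm) 0 (efficient_share Fw) rw ->
  first_zero (excess Fm hm r rw) (efficient_share Fm) 1 rm ->
  equilibrium Fw Fm hw hm r rw rm.
Proof.
  intros [Hrw [Hzw Hnegw]] [Hrm [Hzm Hposm]].
  pose proof (efficient_share_bounds Fw HFw) as Hew.
  pose proof (efficient_share_bounds Fm HFm) as Hem.
  unfold excess in *.
  split; [lra|]. split; [lra|]. split; [|split; [|split; [|split; [|split]]]].
  - intros Hin. specialize (Hzw ltac:(lra)). lra.
  - intros Hin. specialize (Hzm ltac:(lra)). lra.
  - intros ->. exists (efficient_share Fw). split; [lra|].
    intros d Hd. specialize (Hnegw d ltac:(lra)). lra.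
  - intros ->. exists (1 - efficient_share Fm). split; [lra|].
    intros d Hd. specialize (Hposm (1 - d) ltac:(lra)).
    replace (1 - (1 - d)) with d in Hposm by ring. lra.
  - intros Hrw1. lra.
  - intros Hrm0. lra.
Qed.

Lemma equilibrium_exists :
  efficient_share Fw < efficient_share Fm ->
  exists rw rm, equilibrium Fw Fm hw hm r rw rm /\
                rw < efficient_share Fw /\ efficient_share Fm < rm.
Proof.
  intros Hlt.
  pose proof (efficient_share_bounds Fw HFw) as Hew.
  pose proof (efficient_share_bounds Fm HFm) as Hem.
  assert (Hz : 0 < 1 / r) by (apply Rdiv_lt_0_compat; lra).
  destruct (choice_on_domain 0 _ _ (last_zero_excess_exists Fw hw (1 / r) HFw Hhw Hz))
    as [BRw HBRw].
  destruct (choice_on_domain 0 _ _ (first_zero_excess_exists Fm hm r HFm Hhm Hr))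
    as [BRm HBRm].
  assert (HBRw' : forall y, efficient_share Fm <= y <= 1 ->
                  last_zero (excess Fw hw (1 / r) y) 0 (efficient_share Fw) (BRw y))
    by (intros y Hy; apply HBRw; lra).
  assert (HBRm' : forall y, efficient_share Fm <= y <= 1 ->
                  first_zero (excess Fm hm r (BRw y)) (efficient_share Fm) 1 (BRm (BRw y))).
  { intros y Hy. destruct (HBRw' y Hy) as [Hw _]. apply HBRm. lra. }
  destruct (nondecreasing_self_map_fixpoint (fun y => BRm (BRw y)) (efficient_share Fm) 1)
    as [rm [Hrm Hfix]].
  - lra.
  - intros y Hy. destruct (HBRm' y Hy) as [Hm _]. lra.
  - intros y y' Hy Hyy' Hy'.
    pose proof (last_zero_excess_antitone Fw hw (1 / r) HFw Hhw Hz y y' (BRw y) (BRw y')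
                  ltac:(lra) Hyy' Hy' (HBRw' y ltac:(lra)) (HBRw' y' ltac:(lra))).
    destruct (HBRw' y ltac:(lra)) as [Hw _]. destruct (HBRw' y' ltac:(lra)) as [Hw' _].
    apply (first_zero_excess_antitone Fm hm r HFm Hhm Hr (BRw y') (BRw y)); try lra;
      apply HBRm'; lra.
  - simpl in Hfix. pose proof (HBRw' rm Hrm) as Hw. pose proof (HBRm' rm Hrm) as Hm.
    rewrite Hfix in Hm.
    exists (BRw rm), rm. split; [apply equilibrium_of_zeros; assumption|].
    destruct Hw as [Hw _]. destruct Hm as [Hm _]. lra.
Qed.

Lemma equilibrium_rm_le_rw (rw rm : R) :
  equilibrium Fw Fm hw hm r rw rm -> efficient_share Fw < rw -> rm <= rw.
Proof.
  intros [Hrw [Hrm [Hinner _]]] Hgt. apply Rnot_lt_le. intros Hlt.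
  pose proof (efficient_share_bounds Fw HFw) as Hew.
  assert (Hz : 0 < 1 / r) by (apply Rdiv_lt_0_compat; lra).
  pose proof (excess_neg Fw hw (1 / r) Hhw Hz rm rw) as Hneg.
  unfold excess, efficient_share in *.
  specialize (Hinner ltac:(lra)). specialize (Hneg ltac:(lra) ltac:(lra) ltac:(lra)). lra.
Qed.

End Equilibrium.

Theorem proposition2 (mu_w mu_m : R) (Fw Fm hw hm : R -> R) :
  0 < mu_w -> 0 < mu_m ->
  h_assumptions hw -> h_assumptions hm ->
  F_assumptions Fw -> F_assumptions Fm ->
  let r := mu_w / mu_m in
  let rew := 1 - Fw 0 in
  let rem := 1 - Fm 0 in
  rew < rem ->
  (exists rw rm, equilibrium Fw Fm hw hm r rw rm /\
                 rw < rew /\ rew < rem /\ rem < rm) /\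
  ~ (exists rw rm, equilibrium Fw Fm hw hm r rw rm /\
                   rew < rw /\ rw < rm /\ rm < rem).
Proof.
  intros Hmw Hmm Hhw Hhm HFw HFm r rew rem Hlt.
  assert (Hr : 0 < r) by (apply Rdiv_lt_0_compat; assumption).
  split.
  - destruct (equilibrium_exists Fw Fm hw hm r Hr Hhw Hhm HFw HFm Hlt) as [rw [rm [Heq Hbounds]]].
    exists rw, rm. unfold efficient_share in Hbounds. fold rew rem in Hbounds. tauto.
  - intros [rw [rm [Heq [Hw [Hwm _]]]]].
    pose proof (equilibrium_rm_le_rw Fw Fm hw hm r Hr Hhw HFw rw rm Heq Hw). lra.
Qed.
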